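(* Consider the admission control model described in the context, with discount rate $\alpha>0$, and suppose $0\le \Delta d_{i+1}\le \Delta d_i$ for $1\le i\le n-1$ and $\Delta d_1>0$. Then: (a) $w^S_i>0$ for all $i\in\{0,\dots,n-1\}$ and $S\in\mathcal F$; (b) for each fixed $i$, $w^S_i$ is nondecreasing in $S\in\mathcal F$ among sets containing $i$: if $S,T\in\mathcal F$ with $i\in S\subset T$, then $w^S_i\le w^T_i$.
   Context: Admission control model: a single-server queue whose number in system $L(t)\in\{0,1,\dots,n\}$ ($n\ge1$) evolves in continuous time; in state $i$ arrivals occur at rate $\lambda_i>0$ and services at rate $\mu_i>0$ ($1\le i\le n$), $\mu_0=0$. At each time the entry gate is shut ($a=1$, arrivals rejected) or open ($a=0$, arrivals admitted); in state $n$ it is always shut. Discount rate $\alpha>0$. For $S\subseteq\{0,\dots,n-1\}$, the $S$-active policy shuts the gate exactly in states $S\cup\{n\}$; $b^S_i=E_i[\int_0^\infty\lambda_{L(t)}a(t)e^{-\alpha t}dt]$ under it, starting from $i$. Marginal workloads: $w^S_i=\lambda_i[1-(b^S_{i+1}-b^S_i)]$, $0\le i\le n-1$. $\mathcal F=\{S_1,\dots,S_{n+1}\}$ with $S_k=\{k-1,\dots,n-1\}$ ($1\le k\le n$), $S_{n+1}=\emptyset$. Notation: $\Delta x_i=x_i-x_{i-1}$, $d_i=\mu_i-\lambda_i$ ($d_0=-\lambda_0$). *)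

From HB Require Import structures.
From mathcomp Require Import all_boot all_order all_algebra.
Set Implicit Arguments. Unset Strict Implicit. Unset Printing Implicit Defensive.
Import Order.TTheory GRing.Theory Num.Theory.
Local Open Scope ring_scope.

Section Admission.
Variables (R : realFieldType) (n : nat) (lam mu : nat -> R) (alpha : R).

(* States are 'I_n.+1 = {0,...,n}.  S : {set 'I_n.+1} is meant to be a subset
   of {0,...,n-1}; the gate is shut exactly in S ∪ {n}. *)
Definition shut (S : {set 'I_n.+1}) (i : 'I_n.+1) : bool :=
  (i \in S) || (nat_of_ord i == n).

Definition uprate (S : {set 'I_n.+1}) (i : 'I_n.+1) : R :=
  if shut S i then 0 else lam i.

Definition gen (S : {set 'I_n.+1}) : 'M[R]_n.+1 :=
  \matrix_(i, j)
    ((if nat_of_ord j == (nat_of_ord i).+1 then uprate S i else 0)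
     + (if (nat_of_ord j).+1 == nat_of_ord i then mu i else 0)
     - (if j == i then uprate S i + mu i else 0)).

Definition rew (S : {set 'I_n.+1}) : 'cV[R]_n.+1 :=
  \col_i (if shut S i then lam i else 0).

(* b^S = E_i[ int_0^oo r(L(t)) e^{-alpha t} dt ] = (alpha I - Q^S)^{-1} r *)
Definition bvec (S : {set 'I_n.+1}) : 'cV[R]_n.+1 :=
  invmx (alpha%:M - gen S) *m rew S.

Definition b (S : {set 'I_n.+1}) (i : nat) : R := bvec S (inord i) ord0.

Definition w (S : {set 'I_n.+1}) (i : nat) : R :=
  lam i * (1 - (b S i.+1 - b S i)).

Definition Sk (k : nat) : {set 'I_n.+1} :=
  [set j : 'I_n.+1 | (k.-1 <= j)%N && (j < n)%N].

Definition inF (S : {set 'I_n.+1}) : Prop :=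
  exists2 k : nat, (1 <= k <= n.+1)%N & S = Sk k.

Definition d (i : nat) : R := mu i - lam i.
Definition Dd (i : nat) : R := d i - d i.-1.

End Admission.

From HB Require Import structures.
From mathcomp Require Import all_boot all_order all_algebra.
From mathcomp Require Import ring lra zify.
Set Implicit Arguments. Unset Strict Implicit. Unset Printing Implicit Defensive.
Import Order.TTheory GRing.Theory Num.Theory.
Local Open Scope ring_scope.

(* Write [Delta b j = b_j - b_(j-1)], so that [w^S_i = lam_i (1 - Delta b^S (i+1))].
   The S_k-active policy shuts the gate exactly in the states [i >= t := k - 1],
   and subtracting consecutive rows of the resolvent equations
   [(alpha - Q^S) b^S = r^S] gives first-order recursions for [Delta b]:
   [Delta b i = rho_i * Delta b (i+1)] while the gate is open, [Delta b t = rho_t]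
   at the threshold, and
   [(alpha + mu_(i+1)) Delta b (i+1) = lam_(i+1) - lam_i + mu_i Delta b i]
   while it is shut, where the ratios [0 <= rho_i < 1] depend on the rates only.
   As [Delta d >= 0], induction through the shut region gives
   [Delta b j <= rho_j < 1], and the open-region recursion keeps [Delta b] in
   [[0, 1)]; hence (a).  The shut-region recursion is increasing
   in [Delta b i], and lowering the threshold to [t' <= t] replaces
   [Delta b t = rho_t] by a value [<= rho_t]; this gives (b).  Invertibility of
   [alpha - Q^S] comes from strict diagonal dominance. *)

Lemma sum_if_eqn (V : pzSemiRingType) (m k : nat) (a : V) (f : nat -> V) :
  \sum_(j < m) (if (j : nat) == k then a else 0) * f j =
  if (k < m)%N then a * f k else 0.
Proof.
transitivity (\sum_(j < m | (j : nat) == k) a * f j).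
  by rewrite [RHS]big_mkcond; apply: eq_bigr => j _; case: eqP; rewrite ?mul0r.
exact: (@big_ord1_eq V 0 +%R (fun l => a * f l)).
Qed.

Lemma sum_if_succ_eqn (V : pzSemiRingType) (m k : nat) (a : V) (f : nat -> V) :
  \sum_(j < m) (if (j : nat).+1 == k then a else 0) * f j =
  if (0 < k < m.+1)%N then a * f k.-1 else 0.
Proof. by case: k => [|k]; [rewrite big1 // => j _; rewrite mul0r | exact: sum_if_eqn]. Qed.

Lemma diag_dominant_unitmx (R : realFieldType) (m : nat) (A : 'M[R]_m) :
  (forall i, \sum_(j | j != i) `|A i j| < `|A i i|) -> A \in unitmx.
Proof.
move=> dom; rewrite -unitmx_tr -row_free_unit; apply: inj_row_free => v vA0.
apply/rowP => k; rewrite mxE; apply/eqP; rewrite -normr_le0.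
have [i _ vmax] := @arg_maxP _ _ _ k predT (fun j => `|v 0 j|) isT.
have row_i : A i i * v 0 i = - \sum_(j | j != i) A i j * v 0 j.
  have : \sum_j A i j * v 0 j = 0.
    have := congr1 (fun M : 'rV_m => M 0 i) vA0; rewrite !mxE => vA0i.
    by apply: etrans vA0i; apply: eq_bigr => j _; rewrite mxE mulrC.
  by rewrite (bigD1 i) //= => /eqP; rewrite addr_eq0 => /eqP.
have dom_i : `|A i i| * `|v 0 i| <= (\sum_(j | j != i) `|A i j|) * `|v 0 i|.
  rewrite -normrM row_i normrN mulr_suml; apply: le_trans (ler_norm_sum _ _ _) _ => /=.
  by apply: ler_sum => j _; rewrite normrM ler_wpM2l //; apply: vmax.
have vi_le0 : `|v 0 i| <= 0.
  have gap : 0 < `|A i i| - \sum_(j | j != i) `|A i j| by rewrite subr_gt0.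
  by rewrite -(ler_pM2l gap) mulr0 mulrBl subr_le0.
exact: le_trans (vmax k isT) vi_le0.
Qed.

Section Resolvent.
Variables (R : realFieldType) (n : nat) (lam mu : nat -> R) (alpha : R).
Variable S : {set 'I_n.+1}.

Local Notation u := (uprate lam S).

Lemma resolvent_entry (i j : 'I_n.+1) :
  (alpha%:M - gen lam mu S) i j =
  (if (j : nat) == i then alpha + u i + mu i else 0)
  - (if (j : nat) == i.+1 then u i else 0)
  - (if (j : nat).+1 == i then mu i else 0).
Proof.
rewrite !mxE -[i == j]val_eqE -[j == i]val_eqE /=.
have [ji|ji|ji] := ltngtP j i.
- have -> : ((j : nat) == i.+1) = false by apply/eqP; lia.
  by case: eqP => _; rewrite ?mulr0n; ring.
- have -> : ((j : nat).+1 == i) = false by apply/eqP; lia.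
  by case: eqP => _; rewrite ?mulr0n; ring.
- have -> : ((j : nat).+1 == i) = false by apply/eqP; lia.
  have -> : ((j : nat) == i.+1) = false by apply/eqP; lia.
  by rewrite mulr1n; ring.
Qed.

Lemma resolvent_row (v : 'cV[R]_n.+1) (i : 'I_n.+1) :
  ((alpha%:M - gen lam mu S) *m v) i 0 =
  (alpha + u i + mu i) * v i 0
  - (if (i < n)%N then u i * v (inord i.+1) 0 else 0)
  - (if (0 < i)%N then mu i * v (inord i.-1) 0 else 0).
Proof.
pose f k := v (inord k) 0.
have vE (j : 'I_n.+1) : v j 0 = f j by rewrite /f inord_val.
rewrite mxE; under eq_bigr => j _ do rewrite resolvent_entry vE !mulrBl.
rewrite !sumrB sum_if_eqn sum_if_eqn sum_if_succ_eqn ltn_ord vE.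
by rewrite ltnS (leqW (ltn_ord i)) andbT.
Qed.

Hypotheses (alpha_gt0 : 0 < alpha) (lam_ge0 : forall i, (i <= n)%N -> 0 <= lam i)
  (mu_ge0 : forall i, (i <= n)%N -> 0 <= mu i).

Lemma uprate_ge0 (i : 'I_n.+1) : 0 <= u i.
Proof. by rewrite /uprate; case: ifP => // _; apply: lam_ge0; rewrite -ltnS. Qed.

Lemma resolvent_unitmx : (alpha%:M - gen lam mu S) \in unitmx.
Proof.
apply: diag_dominant_unitmx => i; set A := _ - _.
have u_ge0 := uprate_ge0 i; have mu_i_ge0 := mu_ge0 (ltn_ord i).
have Aii : A i i = alpha + u i + mu i.
  by rewrite resolvent_entry eqxx ltn_eqF // gtn_eqF // !subr0.
have off (j : 'I_n.+1) : j != i -> `|A i j| = - A i j.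
  move=> ji; apply: ler0_norm; rewrite resolvent_entry ifN // sub0r -opprD oppr_le0.
  by rewrite addr_ge0 //; case: ifP.
(* Off-diagonal entries are [<= 0] and every row sum is [>= alpha]. *)
have row_gt0 : 0 < \sum_j A i j.
  have -> : \sum_j A i j = (A *m const_mx 1 : 'cV_n.+1) i 0.
    by rewrite mxE; apply: eq_bigr => j _; rewrite [const_mx _ _ _]mxE mulr1.
  rewrite resolvent_row !mxE !mulr1; apply: lt_le_trans alpha_gt0 _.
  by move: u_ge0 mu_i_ge0; case: ifP => _; case: ifP => _; lra.
have Aii_ge0 : 0 <= alpha + u i + mu i by move: u_ge0 mu_i_ge0 alpha_gt0; lra.
by move: row_gt0; rewrite (bigD1 i) //= (eq_bigr _ off) sumrN Aii ger0_norm //; lra.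
Qed.

Hypothesis mu0 : mu 0%N = 0.

Lemma resolvent_row_b i : (i <= n)%N ->
  (alpha + u (inord i) + mu i) * b lam mu alpha S i
  - u (inord i) * b lam mu alpha S i.+1 - mu i * b lam mu alpha S i.-1
  = rew lam S (inord i) 0.
Proof.
move=> le_in.
have := congr1 (fun v : 'cV_n.+1 => v (inord i) 0) (mulKVmx resolvent_unitmx (rew lam S)).
rewrite resolvent_row inordK // => <-; rewrite /b (_ : 0 = ord0) //.
congr (_ - _ - _); last by case: posnP => [->|//]; rewrite mu0 !mul0r.
case: ltnP => // le_ni; have -> : u (inord i) = 0.
  by rewrite /uprate /shut inordK // (_ : i = n) ?eqxx ?orbT //; apply/eqP; rewrite eqn_leq le_in.
by rewrite mul0r.
Qed.

End Resolvent.

Definition Delta {R : zmodType} (b : nat -> R) (i : nat) : R := b i - b i.-1.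

Section ThresholdPolicies.
Variables (R : realFieldType) (n : nat) (lam mu : nat -> R) (alpha : R).
Hypotheses (alpha_gt0 : 0 < alpha)
  (lam_ge0 : forall i, (i <= n)%N -> 0 <= lam i)
  (mu_ge0 : forall i, (i <= n)%N -> 0 <= mu i)
  (Dd_ge0 : forall k, (1 <= k <= n)%N -> 0 <= Dd lam mu k).

(* [rho k] is the jump [Delta b k] at the threshold of the policy that shuts
   the gate from state [k] on (see [Delta_threshold]). *)
Fixpoint rho (k : nat) : R :=
  if k is k'.+1 then lam k / (alpha + mu k + lam k' - mu k' * rho k') else 0.

Lemma rho_bounds [k] : (k <= n)%N ->
  [/\ 0 <= rho k, rho k < 1 & mu k * rho k <= lam k].
Proof.
elim: k => [_ | k IH] /=; first by rewrite mulr0 lexx ltr01 lam_ge0.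
move=> lt_kn; have [rho_ge0 rho_lt1 mu_rho] := IH (ltnW lt_kn).
have := @Dd_ge0 k.+1; rewrite /Dd /d /= lt_kn => /(_ isT) Dd_k.
have muk_ge0 := mu_ge0 (ltnW lt_kn); have mu1_ge0 := mu_ge0 lt_kn.
have lam1_ge0 := lam_ge0 lt_kn; set D := _ - _.
have mu_rho_le : mu k * rho k <= mu k by rewrite ler_piMr // ltW.
have D_ge : alpha + mu k.+1 <= D by rewrite /D; move: mu_rho; lra.
have D_gt0 : 0 < D by move: alpha_gt0 mu1_ge0 D_ge; lra.
split; first by rewrite divr_ge0 // ltW.
  by rewrite ltr_pdivrMr // mul1r /D; move: Dd_k mu_rho_le alpha_gt0; lra.
rewrite mulrA ler_pdivrMr // [leRHS]mulrC; apply: ler_wpM2r => //.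
by move: D_ge alpha_gt0; lra.
Qed.

Lemma rho_den_gt0 [i] : (i < n)%N -> 0 < alpha + mu i.+1 + lam i - mu i * rho i.
Proof.
move=> lt_in; have [_ _ mu_rho] := rho_bounds (ltnW lt_in).
by move: mu_rho alpha_gt0 (mu_ge0 lt_in); lra.
Qed.

Definition admitted_rate (t i : nat) : R := if (i < t)%N then lam i else 0.
Definition rejected_rate (t i : nat) : R := if (i < t)%N then 0 else lam i.

(* At [i = 0] the term [mu 0 * b 0.-1] is [mu 0 * b 0], not a
   missing neighbour, hence the hypothesis [mu 0 = 0] in [resolvent_row_b]. *)
Definition balanced (t : nat) (b : nat -> R) : Prop :=
  forall i, (i <= n)%N ->
    (alpha + admitted_rate t i + mu i) * b i - admitted_rate t i * b i.+1
    - mu i * b i.-1 = rejected_rate t i.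

Lemma rho_solve [i] : (i < n)%N -> forall x y : R,
  (alpha + mu i.+1 + lam i) * x = mu i * (rho i * x) + lam i.+1 * y ->
  x = rho i.+1 * y.
Proof.
move=> lt_in x y E; have D_gt0 := rho_den_gt0 lt_in.
rewrite /= mulrAC -[LHS](mulfK (lt0r_neq0 D_gt0)); congr (_ / _).
by rewrite mulrBr [_ * (_ + _)]mulrC E; ring.
Qed.

Section OnePolicy.
Context {t : nat} {b : nat -> R}.
Hypotheses (t_le_n : (t <= n)%N) (bal : balanced t b).

Local Notation a := (admitted_rate t).
Local Notation r := (rejected_rate t).

Lemma balanced_Delta [i] : (i < n)%N ->
  (alpha + mu i.+1 + a i) * Delta b i.+1 =
  a i.+1 * Delta b i.+2 + mu i * Delta b i + (r i.+1 - r i).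
Proof. by move=> lt_in; rewrite -(bal lt_in) -(bal (ltnW lt_in)) /Delta /=; ring. Qed.

Lemma Delta_open [i] : (i < t)%N -> Delta b i = rho i * Delta b i.+1.
Proof.
elim: i => [|i IH] lt_it; first by rewrite /Delta subrr mul0r.
have lt_in : (i < n)%N by apply: leq_trans t_le_n; apply: ltnW.
apply: (rho_solve lt_in); have := balanced_Delta lt_in.
rewrite /admitted_rate /rejected_rate lt_it (ltnW lt_it) subrr addr0 => ->.
by rewrite IH 1?ltnW // addrC.
Qed.

Lemma Delta_threshold : Delta b t = rho t.
Proof.
case E: t => [|s]; first by rewrite /Delta subrr.
have lt_sn : (s < n)%N by rewrite -E.
have lt_st : (s < t)%N by rewrite E.
rewrite -[rho _]mulr1; apply: (rho_solve lt_sn); have := balanced_Delta lt_sn.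
rewrite /admitted_rate /rejected_rate E ltnn ltnSn (Delta_open lt_st) => ->.
by rewrite mul0r add0r subr0 mulr1.
Qed.

Lemma Delta_shut [i] : (t <= i)%N -> (i < n)%N ->
  (alpha + mu i.+1) * Delta b i.+1 = lam i.+1 - lam i + mu i * Delta b i.
Proof.
move=> le_ti lt_in; have := balanced_Delta lt_in.
rewrite /admitted_rate /rejected_rate !ltnNge le_ti (leqW le_ti) /= !mul0r add0r addr0.
by move=> ->; rewrite addrC.
Qed.

Lemma Delta_shut_step [j] : (t <= j)%N -> (j < n)%N ->
  Delta b j <= rho j -> Delta b j.+1 <= rho j.+1.
Proof.
move=> le_tj lt_jn le_rho.
have [_ rho_lt1 _] := rho_bounds lt_jn.
have [_ _ mu_rho] := rho_bounds (ltnW lt_jn).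
have D_gt0 := rho_den_gt0 lt_jn.
have rhoE : (alpha + mu j.+1) * rho j.+1 =
    lam j.+1 - rho j.+1 * (lam j - mu j * rho j).
  have rhoD : rho j.+1 * (alpha + mu j.+1 + lam j - mu j * rho j) = lam j.+1.
    by rewrite /= divfK ?lt0r_neq0.
  by rewrite -[in RHS]rhoD; ring.
have A_gt0 : 0 < alpha + mu j.+1 by move: alpha_gt0 (mu_ge0 lt_jn); lra.
rewrite -(ler_pM2l A_gt0) Delta_shut // rhoE.
have : mu j * Delta b j <= mu j * rho j.
  by apply: ler_wpM2l => //; apply: mu_ge0; exact: ltnW.
have : 0 <= (1 - rho j.+1) * (lam j - mu j * rho j).
  by apply: mulr_ge0; move: rho_lt1 mu_rho; lra.
lra.
Qed.

Lemma Delta_shut_le_rho [j] : (t <= j <= n)%N -> Delta b j <= rho j.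
Proof.
elim: j => [|j IH] /andP[le_tj le_jn]; first by rewrite /Delta subrr.
case: (ltngtP t j.+1) le_tj => // [lt_tj _ | <- _]; last by rewrite Delta_threshold.
by apply: (Delta_shut_step lt_tj le_jn); apply: IH; rewrite -ltnS lt_tj ltnW.
Qed.

Lemma Delta_open_bounds [j] : (j <= t)%N -> 0 <= Delta b j < 1.
Proof.
move=> le_jt; have [m -> {j le_jt}] : exists m, j = (t - m)%N by exists (t - j)%N; lia.
elim: m => [|m IH]; first by rewrite subn0 Delta_threshold; case/rho_bounds: t_le_n => -> ->.
case: (leqP t m) => [le_tm | lt_mt].
  have -> : (t - m.+1 = 0)%N by lia.
  by rewrite /Delta subrr lexx ltr01.
have lt_t : (t - m.+1 < t)%N by lia.
have succE : (t - m.+1).+1 = (t - m)%N by lia.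
have [rho_ge0 rho_le1 _] := rho_bounds (leq_trans (ltnW lt_t) t_le_n).
rewrite (Delta_open lt_t) succE.
case/andP: IH => x_ge0 x_lt1; rewrite mulr_ge0 //=.
by apply: le_lt_trans x_lt1; rewrite ler_piMl // ltW.
Qed.

Lemma Delta_lt1 [j] : (j <= n)%N -> Delta b j < 1.
Proof.
move=> le_jn; case: (leqP j t) => [le_jt | lt_tj].
  by case/andP: (Delta_open_bounds le_jt).
have [_ rho_lt1 _] := rho_bounds le_jn.
by apply: le_lt_trans rho_lt1; apply: Delta_shut_le_rho; rewrite le_jn ltnW.
Qed.

End OnePolicy.

Lemma Delta_le_lower_threshold t t' (b c : nat -> R) :
  (t' <= t <= n)%N -> balanced t b -> balanced t' c ->
  forall j, (t <= j <= n)%N -> Delta c j <= Delta b j.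
Proof.
move=> /andP[le_t't le_tn] bal_b bal_c.
have le_t'n := leq_trans le_t't le_tn.
elim=> [|j IH] /andP[le_tj le_jn]; first by rewrite /Delta !subrr.
case: (ltngtP t j.+1) le_tj => // [lt_tj _ | <- _].
  have A_gt0 : 0 < alpha + mu j.+1 by move: alpha_gt0 (mu_ge0 le_jn); lra.
  rewrite -(ler_pM2l A_gt0) (Delta_shut bal_b lt_tj le_jn).
  rewrite (Delta_shut bal_c (leq_trans le_t't lt_tj) le_jn) lerD2l.
  by apply: ler_wpM2l; [apply: mu_ge0; exact: ltnW | apply: IH; rewrite -ltnS lt_tj ltnW].
by rewrite (Delta_threshold le_tn bal_b); apply: (Delta_shut_le_rho le_t'n bal_c); rewrite le_t't.
Qed.

End ThresholdPolicies.

Lemma shut_Sk n k i : (i <= n)%N -> (k <= n.+1)%N ->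
  shut (Sk n k) (inord i) = (k.-1 <= i)%N.
Proof. by move=> le_in le_kn; rewrite /shut /Sk inE inordK //; lia. Qed.

Lemma mem_Sk n k i : (i < n)%N -> (inord i \in Sk n k) = (k.-1 <= i)%N.
Proof. by move=> lt_in; rewrite /Sk inE inordK ?lt_in ?andbT // ltnW. Qed.

Lemma balanced_b_Sk (R : realFieldType) n (lam mu : nat -> R) alpha k :
  0 < alpha -> (forall i, (i <= n)%N -> 0 <= lam i) ->
  (forall i, (i <= n)%N -> 0 <= mu i) -> mu 0%N = 0 -> (k <= n.+1)%N ->
  balanced n lam mu alpha k.-1 (b lam mu alpha (Sk n k)).
Proof.
move=> alpha_gt0 lam_ge0 mu_ge0 mu0 le_kn i le_in.
have := resolvent_row_b (Sk n k) alpha_gt0 lam_ge0 mu_ge0 mu0 le_in.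
by rewrite /uprate /rew mxE shut_Sk // inordK // /admitted_rate /rejected_rate ltnNge !if_neg.
Qed.

Theorem proposition10 (R : realFieldType) (n : nat) (lam mu : nat -> R) (alpha : R) :
  (1 <= n)%N ->
  0 < alpha ->
  (forall i, (i <= n)%N -> 0 < lam i) ->
  (forall i, (1 <= i <= n)%N -> 0 < mu i) ->
  mu 0%N = 0 ->
  (forall i, (1 <= i <= n.-1)%N ->
     0 <= Dd lam mu i.+1 /\ Dd lam mu i.+1 <= Dd lam mu i) ->
  0 < Dd lam mu 1 ->
  (forall (S : {set 'I_n.+1}) (i : nat), inF S -> (i < n)%N ->
     0 < w lam mu alpha S i)
  /\
  (forall (S T : {set 'I_n.+1}) (i : nat), inF S -> inF T -> (i < n)%N ->
     inord i \in S -> S \subset T ->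
     w lam mu alpha S i <= w lam mu alpha T i).
Proof.
move=> _ alpha_gt0 lam_gt0 mu_gt0 mu0 Dd_conc Dd1_gt0.
have lam_ge0 i : (i <= n)%N -> 0 <= lam i by move/lam_gt0/ltW.
have mu_ge0 i : (i <= n)%N -> 0 <= mu i.
  by case: i => [|i] le_in; rewrite ?mu0 // ltW // mu_gt0.
have Dd_ge0 k : (1 <= k <= n)%N -> 0 <= Dd lam mu k.
  case: k => [|[|k]] //= le_kn; first exact: ltW.
  by case: (Dd_conc k.+1); first lia.
have bal k := balanced_b_Sk alpha_gt0 lam_ge0 mu_ge0 mu0 (k := k).
split=> [S i [k /andP[_ le_kn] ->] lt_in |
         S T i [k /andP[_ le_kn] ->] [k' /andP[_ le_k'n] ->] lt_in].
  rewrite /w mulr_gt0 ?lam_gt0 1?ltnW // subr_gt0.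
  by apply: (Delta_lt1 alpha_gt0 lam_ge0 mu_ge0 Dd_ge0 _ (bal k le_kn)); lia.
rewrite mem_Sk // => le_ki /subsetP sub_ST.
have lt_kn : (k.-1 < n)%N by lia.
have /sub_ST : inord k.-1 \in Sk n k by rewrite mem_Sk.
rewrite mem_Sk // => le_k'k.
rewrite /w ler_wpM2l ?lam_ge0 1?ltnW // lerD2l lerN2.
have := Delta_le_lower_threshold alpha_gt0 lam_ge0 mu_ge0 Dd_ge0.
by apply; [| exact: bal k le_kn | exact: bal k' le_k'n |]; lia.
Qed.
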